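(* For every finite graph $\Gamma$ there is a finite group $G$ such that $\Gamma$ is isomorphic to an induced subgraph of the difference graph $\mathcal{D}(G)$. Moreover, $G$ can be chosen to be a cyclic group of squarefree order.
   Context: For a finite group $G$ with identity $e$: the intersection power graph $\mathcal{G}_I(G)$ has vertex set $G$, two distinct non-identity vertices $x,y$ being adjacent iff $\langle x\rangle\cap\langle y\rangle\neq\{e\}$, and $e$ being adjacent to every other vertex. The power graph $\mathcal{P}(G)$ has vertex set $G$, two distinct vertices being adjacent iff one is a power of the other. The difference graph $\mathcal{D}(G)$ is the graph with edge set $E(\mathcal{G}_I(G))\setminus E(\mathcal{P}(G))$ on vertex set $G$, with all isolated vertices removed. *)

From mathcomp Require Import all_boot all_fingroup.
Set Implicit Arguments. Unset Strict Implicit. Unset Printing Implicit Defensive.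
Local Open Scope group_scope.

Definition squarefree (n : nat) : Prop :=
  forall p : nat, prime p -> ~ (p * p %| n)%N.

Section Graphs.
Variable gT : finGroupType.

Definition ip_adj (x y : gT) : Prop :=
  x <> y /\ (x = 1 \/ y = 1 \/ <[x]> :&: <[y]> <> 1%G).

Definition pow_adj (x y : gT) : Prop :=
  x <> y /\ ((exists k : nat, x = y ^+ k) \/ (exists k : nat, y = x ^+ k)).

Definition diff_adj (x y : gT) : Prop := ip_adj x y /\ ~ pow_adj x y.

(* Vertex set of D(G): non-isolated vertices. *)
Definition diff_vertex (x : gT) : Prop := exists y : gT, diff_adj x y.
End Graphs.

Definition induced_in_diff_graph (V : finType) (adj : rel V) (gT : finGroupType) : Prop :=
  exists f : V -> gT,
    injective f /\ (forall v, diff_vertex (f v)) /\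
    (forall u v, adj u v <-> diff_adj (f u) (f v)).

From mathcomp Require Import all_boot all_fingroup all_solvable.
From mathcomp Require Import zmodp.
Set Implicit Arguments. Unset Strict Implicit. Unset Printing Implicit Defensive.

(* In a cyclic group, x is a power of y iff #[x] divides #[y], and
   <[x]> :&: <[y]> has order gcdn #[x] #[y]; so x and y are adjacent in D(G)
   iff their orders share a prime but neither divides the other.  Attach
   distinct primes to the points of a finite set L and send S : {set L} to an
   element whose order is the product of the primes of S, in a cyclic group
   whose order is the product of all of them: D(G) then induces on these
   elements the overlap graph of the subsets of L (meeting but incomparable
   sets).  Every finite graph is an induced subgraph of an overlap graph: give
   each vertex a private point, each edge a point, and each vertex a point
   shared with a witness set that keeps it non-isolated. *)

Local Open Scope group_scope.

Lemma orderX_div_order (gT : finGroupType) (a : gT) d :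
  (d %| #[a])%N -> #[a ^+ (#[a] %/ d)] = d.
Proof.
move=> d_a; have a_gt0 := order_gt0 a.
by rewrite orderXdiv ?dvdn_div // divnA // mulKn.
Qed.

Section CyclicGroup.
Variable gT : finGroupType.
Hypothesis cycT : cyclic [set: gT].

Lemma cyclic_mem_cycle (x y : gT) : (x \in <[y]>) = (#[x] %| #[y])%N.
Proof. by rewrite -cycle_subG -(cardSg_cyclic cycT) ?subsetT. Qed.

Lemma cyclic_expgP (x y : gT) : (exists k, x = y ^+ k) <-> (#[x] %| #[y])%N.
Proof. by rewrite -cyclic_mem_cycle; split => /cycleP. Qed.

Lemma cyclic_card_cycleI (x y : gT) :
  #|<[x]> :&: <[y]>| = gcdn #[x] #[y].
Proof.
have /cyclicP[g defT] := cycT.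
set d := gcdn _ _.
have d_g : (d %| #[g])%N.
  rewrite orderE -defT; apply: dvdn_trans (dvdn_gcdl _ _) (order_dvdG _).
  exact: in_setT.
have z_xy : g ^+ (#[g] %/ d) \in <[x]> :&: <[y]>.
  by rewrite inE !cyclic_mem_cycle orderX_div_order // dvdn_gcdl dvdn_gcdr.
apply/eqP; rewrite eqn_dvd dvdn_gcd !orderE !cardSg ?subsetIl ?subsetIr //=.
by rewrite -{1}(orderX_div_order d_g) orderE cardSg // cycle_subG.
Qed.

Lemma cyclic_diff_adjE (x y : gT) :
  diff_adj x y <->
  [/\ ~~ coprime #[x] #[y], ~~ (#[x] %| #[y])%N & ~~ (#[y] %| #[x])%N].
Proof.
have ntI : <[x]> :&: <[y]> <> 1 <-> ~~ coprime #[x] #[y].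
  by rewrite /coprime -cyclic_card_cycleI -trivg_card1; split => /eqP.
rewrite /diff_adj /ip_adj /pow_adj.
split=> [[[neq_xy adj_xy] not_pow] | [/ntI nt_xy ndvd_xy ndvd_yx]].
  have [ndvd_xy ndvd_yx] : ~~ (#[x] %| #[y])%N /\ ~~ (#[y] %| #[x])%N.
    split; apply/negP => /cyclic_expgP pow; apply: not_pow.
      by split=> //; left.
    by split=> //; right.
  split=> //; case: adj_xy => [x1 | [y1 | /ntI //]].
    by rewrite x1 order1 dvd1n in ndvd_xy.
  by rewrite y1 order1 dvd1n in ndvd_yx.
split.
  split=> [eq_xy | ]; last by right; right.
  by rewrite eq_xy dvdnn in ndvd_xy.
case=> _ [/cyclic_expgP dvd | /cyclic_expgP dvd].
  by rewrite dvd in ndvd_xy.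
by rewrite dvd in ndvd_yx.
Qed.

End CyclicGroup.

Section PrimeProducts.
Variables (L : finType) (q : L -> nat).
Hypotheses (q_prime : forall l, prime (q l)) (q_inj : injective q).

Definition prime_prod (S : {set L}) : nat := \prod_(l in S) q l.

Lemma prime_prod_gt0 S : (0 < prime_prod S)%N.
Proof. by rewrite prodn_gt0 // => l; rewrite prime_gt0. Qed.

Lemma prime_dvd_prime_prod p S :
  prime p -> (p %| prime_prod S)%N -> exists2 l, l \in S & p = q l.
Proof.
move=> p_pr; rewrite Euclid_dvd_prod // big_orE => /existsP[l /andP[lS]].
by rewrite dvdn_prime2 // => /eqP ->; exists l.
Qed.

Lemma dvdn_prime_prod l S : (q l %| prime_prod S)%N = (l \in S).
Proof.
apply/idP/idP => [/prime_dvd_prime_prod[// | m mS /q_inj ->] // | lS].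
by rewrite /prime_prod (big_setD1 l lS) dvdn_mulr.
Qed.

Lemma prime_prod_dvd S R : (prime_prod S %| prime_prod R)%N = (S \subset R).
Proof.
apply/idP/idP => [dvd_SR | sSR].
  apply/subsetP => l lS.
  by rewrite -dvdn_prime_prod (dvdn_trans _ dvd_SR) ?dvdn_prime_prod.
rewrite /prime_prod [X in (_ %| X)%N](big_setID S) /= (setIidPr sSR).
exact: dvdn_mulr.
Qed.

Lemma coprime_prime_prod S R :
  coprime (prime_prod S) (prime_prod R) = [disjoint S & R].
Proof.
rewrite /prime_prod (big_morph (coprime^~ _) (coprimeMl _) (coprime1n _)).
rewrite big_andE disjoint_subset; apply/forall_inP/subsetP => disj l /disj.
  by rewrite prime_coprime // dvdn_prime_prod inE.
by rewrite inE prime_coprime // dvdn_prime_prod.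
Qed.

Lemma squarefree_prime_prod S : squarefree (prime_prod S).
Proof.
move=> p p_pr pp_S.
have p_S : (p %| prime_prod S)%N := dvdn_trans (dvdn_mulr _ (dvdnn p)) pp_S.
have [l lS def_p] := prime_dvd_prime_prod p_pr p_S.
move: pp_S; rewrite def_p /prime_prod (big_setD1 l lS).
rewrite dvdn_pmul2l ?prime_gt0 //.
by rewrite dvdn_prime_prod setD11.
Qed.

Lemma prime_prod_inj : injective prime_prod.
Proof.
move=> S R eq_SR; apply/eqP; rewrite eqEsubset -!prime_prod_dvd eq_SR.
by rewrite dvdnn.
Qed.

End PrimeProducts.

Fixpoint prime_chain (k : nat) : nat :=
  if k is k'.+1 then s2val (prime_above (prime_chain k')) else 2.

Lemma prime_chain_prime k : prime (prime_chain k).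
Proof. by case: k => [|k] //=; case: prime_above. Qed.

Lemma prime_chain_inj : injective prime_chain.
Proof.
apply/incn_inj/leq_mono/(homo_ltn ltn_trans) => k /=.
by case: prime_above.
Qed.

Definition overlap (T : finType) (A B : {set T}) : bool :=
  [&& ~~ [disjoint A & B], ~~ (A \subset B) & ~~ (B \subset A)].

Lemma cyclic_Zp m : cyclic [set: 'I_m.+1].
Proof. by apply/cyclicP; exists Zp1; exact: Zp_cycle. Qed.

Section CyclicCode.
Variables (L : finType) (q : L -> nat).
Hypotheses (q_prime : forall l, prime (q l)) (q_inj : injective q).
Local Notation n := (prime_prod q [set: L]).
Local Notation Zn := 'I_n.-1.+1.

Definition code (S : {set L}) : Zn := Zp1 ^+ (n %/ prime_prod q S).

Lemma order_code S : #[code S] = prime_prod q S.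
Proof.
have n_gt0 := prime_prod_gt0 q_prime [set: L].
rewrite /code -[n in (n %/ _)%N](prednK n_gt0) -order_Zp1.
by rewrite orderX_div_order // order_Zp1 prednK // prime_prod_dvd ?subsetT.
Qed.

Lemma code_inj : injective code.
Proof.
move=> S R /(congr1 order); rewrite !order_code.
exact: prime_prod_inj.
Qed.

Lemma diff_adj_code S R : diff_adj (code S) (code R) <-> overlap S R.
Proof.
apply: iff_trans (cyclic_diff_adjE (cyclic_Zp _) _ _) _.
rewrite !order_code coprime_prime_prod // !prime_prod_dvd //.
rewrite /overlap; split=> [[-> -> ->] // | /and3P[]]; by split.
Qed.

End CyclicCode.

Section OverlapModel.
Variables (V : finType) (adj : rel V).
Hypotheses (adj_sym : symmetric adj) (adj_irr : irreflexive adj).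

(* Label inl (inl v) lies only in vertex_set v, inl (inr v) in vertex_set v and
   witness_set v, inr (inl v) only in witness_set v, and inr (inr (a, b)) in
   vertex_set a and vertex_set b when ab is an edge. *)
Local Notation label := ((V + V) + (V + V * V))%type.

Definition vertex_set (v : V) : {set label} := [set l : label |
  match l with
  | inl (inl a) | inl (inr a) => a == v
  | inr (inl _) => false
  | inr (inr (a, b)) => adj a b && ((a == v) || (b == v))
  end].

Definition witness_set (v : V) : {set label} := [set l : label |
  match l with
  | inl (inr a) | inr (inl a) => a == v
  | _ => false
  end].

Lemma vertex_set_inj : injective vertex_set.
Proof.
move=> u v eq_uv; have: inl (inl u) \in vertex_set u by rewrite inE /=.
by rewrite eq_uv inE => /eqP.
Qed.

Lemma overlap_vertex_witness v : overlap (vertex_set v) (witness_set v).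
Proof.
apply/and3P; split.
- rewrite -setI_eq0; apply/set0Pn.
  by exists (inl (inr v)); rewrite !inE /= eqxx.
- by apply/subsetPn; exists (inl (inl v)); rewrite !inE /= ?eqxx.
- by apply/subsetPn; exists (inr (inl v)); rewrite !inE /= ?eqxx.
Qed.

Lemma overlap_vertex_sets u v : overlap (vertex_set u) (vertex_set v) = adj u v.
Proof.
have [<- | neq_uv] := eqVneq u v.
  by rewrite adj_irr /overlap subxx !andbF.
have own_private (a b : V) : a != b -> ~~ (vertex_set a \subset vertex_set b).
  by move=> neq_ab; apply/subsetPn; exists (inl (inl a)); rewrite !inE /= ?eqxx.
rewrite /overlap !own_private ?andbT // 1?eq_sym //.
apply/pred0Pn/idP => [[l /andP[]] | adj_uv].
  case: l => [[a | a] | [a | [a b]]]; rewrite !inE //=.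
  1, 2: by move=> /eqP eq_u /eqP eq_v; subst; rewrite eqxx in neq_uv.
  case/andP=> adj_ab /orP[]/eqP eq_u /andP[_ /orP[]/eqP eq_v]; subst;
    by [ | rewrite eqxx in neq_uv | rewrite adj_sym].
by exists (inr (inr (u, v))); rewrite !inE /= adj_uv !eqxx orbT.
Qed.

End OverlapModel.

Theorem theorem3p8 (V : finType) (adj : rel V)
  (adj_sym : symmetric adj) (adj_irr : irreflexive adj) :
  exists gT : finGroupType,
    cyclic [set: gT] /\ squarefree #|gT| /\ induced_in_diff_graph adj gT.
Proof.
pose q l := prime_chain (@enum_rank ((V + V) + (V + V * V))%type l).
have q_prime l : prime (q l) by apply: prime_chain_prime.
have q_inj : injective q by move=> l m /prime_chain_inj/val_inj/enum_rank_inj.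
have n_gt0 := prime_prod_gt0 q_prime [set: _].
exists ('I_(prime_prod q [set: _]).-1.+1 : finGroupType).
split; first exact: cyclic_Zp.
split; first by rewrite card_ord prednK //; apply: squarefree_prime_prod.
exists (fun v => code q (vertex_set adj v)); split; [|split].
- exact: inj_comp (code_inj q_prime q_inj) (@vertex_set_inj _ adj).
- move=> v; exists (code q (witness_set v)).
  exact/diff_adj_code/overlap_vertex_witness.
- move=> u v; rewrite -(overlap_vertex_sets adj_sym adj_irr).
  exact: iff_sym (diff_adj_code q_prime q_inj _ _).
Qed.
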